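(* Let $\Lambda=\{0,1\}^2\subset\mathbb{Z}^2$ (points $(x,y)$) and let $\mu$ be the probability measure on $\{0,1\}^\Lambda$ giving probability $1/4$ to each of the following four configurations (listing the occupied sites, all others being $0$): $\eta^{(1)}$: $\{(0,0)\}$; $\eta^{(2)}$: $\{(0,0),(0,1),(1,0)\}$; $\eta^{(3)}$: $\{(0,1),(1,1)\}$; $\eta^{(4)}$: $\{(1,0),(1,1)\}$. Then $\mu$ is LTI, but there is no probability measure on configurations of a $3\times3$ square $\Lambda'\supset\Lambda$ whose marginal on each of the four $2\times 2$ subsquares of $\Lambda'$ is the corresponding translate of $\mu$; in particular $\mu$ has no translation invariant extension to $\{0,1\}^{\mathbb{Z}^2}$.
   Context: A probability measure $\mu_\Lambda$ on $\{0,1\}^\Lambda$, $\Lambda\subset\mathbb{Z}^d$, is LTI if for all $A,A'\subset\Lambda$ with $A'$ a translate of $A$, the marginal on $\{0,1\}^{A'}$ is the translate of the marginal on $\{0,1\}^A$. A translation invariant extension is a $\mathbb{Z}^2$-translation invariant probability measure on $\{0,1\}^{\mathbb{Z}^2}$ with marginal $\mu$ on $\Lambda$. *)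

From Stdlib Require Import Reals ZArith List Bool.
Import ListNotations.
Open Scope R_scope.

Definition site := (Z * Z)%type.
Definition site_eqb (x y : site) : bool :=
  (Z.eqb (fst x) (fst y) && Z.eqb (snd x) (snd y))%bool.
Definition vadd (v x : site) : site := ((fst v + fst x)%Z, (snd v + snd x)%Z).

(* A configuration is a function Z^2 -> {0,1}; a configuration on a finite
   region A is represented by any function, only its values on A matter. *)
Definition config := site -> bool.
Definition upd (s : config) (a : site) (b : bool) : config :=
  fun x => if site_eqb x a then b else s x.

(* canonical enumeration of {0,1}^A (configurations that are 0 off A);
   for A without duplicates each element of {0,1}^A occurs exactly once *)
Fixpoint configs (A : list site) : list config :=
  match A with
  | nil => [fun _ => false]
  | a :: A' => flat_map (fun s => [upd s a false; upd s a true]) (configs A')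
  end.

Definition agreeb (B : list site) (s t : config) : bool :=
  forallb (fun x => Bool.eqb (s x) (t x)) B.

Definition sumR (l : list R) : R := fold_right Rplus 0 l.

Definition measure := config -> R.

Definition is_prob (nu : measure) (A : list site) : Prop :=
  (forall s, In s (configs A) -> 0 <= nu s) /\ sumR (map nu (configs A)) = 1.

Definition marg (nu : measure) (A B : list site) (xi : config) : R :=
  sumR (map (fun s => if agreeb B s xi then nu s else 0) (configs A)).

Definition tshift (xi : config) (v : site) : config := fun x => xi (vadd x v).

Definition LTI (nu : measure) (A : list site) : Prop :=
  forall (B : list site) (v : site),
    incl B A -> incl (map (vadd v) B) A ->
    forall xi : config, marg nu A (map (vadd v) B) xi = marg nu A B (tshift xi v).

Definition Lam : list site := [(0,0)%Z; (0,1)%Z; (1,0)%Z; (1,1)%Z].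

Definition sq3 (a b : Z) : list site :=
  flat_map (fun i => map (fun j => ((a + i)%Z, (b + j)%Z)) [0%Z; 1%Z; 2%Z])
           [0%Z; 1%Z; 2%Z].

Definition occ (l : list site) : config := fun x => existsb (site_eqb x) l.

Definition eta1 : config := occ [(0,0)%Z].
Definition eta2 : config := occ [(0,0)%Z; (0,1)%Z; (1,0)%Z].
Definition eta3 : config := occ [(0,1)%Z; (1,1)%Z].
Definition eta4 : config := occ [(1,0)%Z; (1,1)%Z].

Definition mu : measure := fun s =>
  (if agreeb Lam s eta1 then 1/4 else 0) + (if agreeb Lam s eta2 then 1/4 else 0)
  + (if agreeb Lam s eta3 then 1/4 else 0) + (if agreeb Lam s eta4 then 1/4 else 0).

(* A translation invariant probability measure on {0,1}^(Z^2), described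
   (via Kolmogorov's extension theorem) by its consistent family of
   cylinder probabilities P A xi = Prob(config agrees with xi on A),
   A a finite list of sites; its marginal on Lam must be nu. *)
Definition TIExtension (nu : measure) : Prop :=
  exists P : list site -> config -> R,
    (forall A xi, 0 <= P A xi) /\
    (forall xi, P nil xi = 1) /\
    (forall A B xi, (forall x, In x A <-> In x B) -> P A xi = P B xi) /\
    (forall A xi xi', (forall x, In x A -> xi x = xi' x) -> P A xi = P A xi') /\
    (forall a A xi, ~ In a A ->
        P A xi = P (a :: A) (upd xi a false) + P (a :: A) (upd xi a true)) /\
    (forall A v xi, P (map (vadd v) A) xi = P A (tshift xi v)) /\
    (forall xi, P Lam xi = marg nu Lam Lam xi).

(* LTI is a finite verification: [mu] is a quarter of an integer-valued count, so each
   translation identity between marginals is an identity between natural numbers, to be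
   checked for the finitely many translates of sublists of [Lam].

   For the non-extension: no configuration of a 3x3 square has all four of its 2x2 windows
   in the support {eta1, eta2, eta3, eta4} of [mu].  So if [nu] on the square had [mu] as
   each window marginal, every configuration would lie in a window event of [mu]-measure
   zero, and the total mass of [nu], bounded by the sum of these null marginals, would be 0.
   A translation invariant extension [P] would yield such a [nu], namely [P] on the square:
   consistency of the cylinder family makes the window marginals of [P (sq3 0 0)] equal to
   [P] on the windows. *)

From Stdlib Require Import Reals ZArith List.
From Stdlib Require Import Lra Lia Bool FunctionalExtensionality.
Import ListNotations.
Open Scope R_scope.

Lemma site_eqb_spec x y : site_eqb x y = true <-> x = y.
Proof.
  destruct x as [x1 x2], y as [y1 y2]; unfold site_eqb; simpl.
  rewrite andb_true_iff, !Z.eqb_eq.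
  split; [intros [-> ->] | intros [= -> ->]]; auto.
Qed.

Lemma site_eq_dec (x y : site) : {x = y} + {x <> y}.
Proof. decide equality; apply Z.eq_dec. Defined.

Lemma occ_spec l x : occ l x = true <-> In x l.
Proof.
  unfold occ. rewrite existsb_exists. split.
  - intros [y [Hy E]]. apply site_eqb_spec in E. subst. exact Hy.
  - intros H. exists x. split; [exact H | apply site_eqb_spec; reflexivity].
Qed.

Definition inclb (l1 l2 : list site) : bool := forallb (occ l2) l1.

Lemma inclb_spec l1 l2 : inclb l1 l2 = true <-> incl l1 l2.
Proof.
  unfold inclb, incl. rewrite forallb_forall.
  split; intros H x Hx; apply occ_spec; auto.
Qed.

Definition vsub (x v : site) : site := ((fst x - fst v)%Z, (snd x - snd v)%Z).

Lemma vadd_comm v x : vadd v x = vadd x v.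
Proof. unfold vadd. f_equal; lia. Qed.

Lemma vadd0l x : vadd (0, 0)%Z x = x.
Proof. destruct x. reflexivity. Qed.

Lemma vsub_vaddl v x : vsub (vadd v x) v = x.
Proof. destruct v, x. unfold vsub, vadd. simpl. f_equal; lia. Qed.

Lemma vsub_vaddr v x : vsub (vadd v x) x = v.
Proof. destruct v, x. unfold vsub, vadd. simpl. f_equal; lia. Qed.

Definition unshift (p : config) (v : site) : config := fun x => p (vsub x v).

Lemma tshift_unshift p v : tshift (unshift p v) v = p.
Proof.
  apply functional_extensionality. intros x. unfold tshift, unshift.
  rewrite vadd_comm, vsub_vaddl. reflexivity.
Qed.

Lemma tshift_tshift s v w : tshift (tshift s v) w = tshift s (vadd v w).
Proof.
  apply functional_extensionality. intros x. unfold tshift, vadd. simpl.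
  f_equal. f_equal; lia.
Qed.

Lemma upd_same s a c : upd s a c a = c.
Proof. unfold upd. replace (site_eqb a a) with true by (symmetry; apply site_eqb_spec; reflexivity). reflexivity. Qed.

Lemma upd_id s a : upd s a (s a) = s.
Proof.
  apply functional_extensionality. intros x. unfold upd.
  destruct (site_eqb x a) eqn:E; [apply site_eqb_spec in E; subst|]; reflexivity.
Qed.

Lemma agreeb_spec B s t : agreeb B s t = true <-> (forall x, In x B -> s x = t x).
Proof.
  unfold agreeb. rewrite forallb_forall.
  split; intros H x Hx; specialize (H x Hx); [apply eqb_prop | rewrite H; apply eqb_reflx]; auto.
Qed.

Lemma agreeb_ext B B' s s' t t' : (forall x, In x B <-> In x B') ->
  (forall x, In x B -> s x = s' x) -> (forall x, In x B -> t x = t' x) ->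
  agreeb B s t = agreeb B' s' t'.
Proof.
  intros HB Hs Ht. apply eq_iff_eq_true. rewrite !agreeb_spec.
  split; intros H x Hx.
  - apply HB in Hx. rewrite <- Hs, <- Ht by exact Hx. auto.
  - rewrite Hs, Ht by exact Hx. apply H, HB, Hx.
Qed.

Lemma agreeb_upd_notin B s t a c : ~ In a B -> agreeb B (upd s a c) t = agreeb B s t.
Proof.
  intros Ha. apply agreeb_ext; try tauto. intros x Hx. unfold upd.
  destruct (site_eqb x a) eqn:E; [apply site_eqb_spec in E; subst; contradiction | reflexivity].
Qed.

Lemma agreeb_upd_in B s t a c : In a B ->
  agreeb B (upd s a c) t = Bool.eqb c (t a) && agreeb (remove site_eq_dec a B) s t.
Proof.
  intros Ha. rewrite (agreeb_ext B (a :: remove site_eq_dec a B) _ (upd s a c) _ t).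
  - change (Bool.eqb (upd s a c a) (t a) && agreeb (remove site_eq_dec a B) (upd s a c) t
            = Bool.eqb c (t a) && agreeb (remove site_eq_dec a B) s t).
    rewrite upd_same, agreeb_upd_notin by apply remove_In. reflexivity.
  - intros x. destruct (site_eq_dec x a) as [->|Hxa]; simpl; split; auto.
    + intros Hx. right. apply in_in_remove; auto.
    + intros [->|Hx]; [exact Ha | apply (in_remove _ _ _ _ Hx)].
  - reflexivity.
  - reflexivity.
Qed.

Lemma sumR_plus {A} (f g : A -> R) l :
  sumR (map (fun x => f x + g x) l) = sumR (map f l) + sumR (map g l).
Proof. induction l; simpl; [ring | rewrite IHl; ring]. Qed.

Lemma sumR_zero {A} (f : A -> R) l : (forall x, In x l -> f x = 0) -> sumR (map f l) = 0.
Proof.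
  induction l as [|x l IH]; simpl; intros H; [reflexivity|].
  rewrite H, IH by auto. ring.
Qed.

Lemma sumR_nonneg {A} (f : A -> R) l : (forall x, In x l -> 0 <= f x) -> 0 <= sumR (map f l).
Proof.
  induction l as [|x l IH]; simpl; intros H; [lra|].
  pose proof (H x (or_introl eq_refl)). specialize (IH (fun y Hy => H y (or_intror Hy))). lra.
Qed.

Lemma sumR_le {A} (f g : A -> R) l : (forall x, In x l -> f x <= g x) ->
  sumR (map f l) <= sumR (map g l).
Proof.
  induction l as [|x l IH]; simpl; intros H; [lra|].
  pose proof (H x (or_introl eq_refl)). specialize (IH (fun y Hy => H y (or_intror Hy))). lra.
Qed.

Lemma sumR_exchange {A B} (F : A -> B -> R) K L :
  sumR (map (fun k => sumR (map (F k) L)) K) =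
  sumR (map (fun s => sumR (map (fun k => F k s) K)) L).
Proof.
  induction K as [|k K IH]; simpl.
  - symmetry. apply sumR_zero. reflexivity.
  - rewrite IH, <- sumR_plus. reflexivity.
Qed.

Lemma le_sumR_indicator {A} (g : A -> bool) x K :
  (exists k, In k K /\ g k = true) -> 0 <= x ->
  x <= sumR (map (fun k => if g k then x else 0) K).
Proof.
  intros [k [Hk Hg]] Hx. induction K as [|k' K IH]; [destruct Hk|]. simpl.
  assert (0 <= sumR (map (fun k => if g k then x else 0) K))
    by (apply sumR_nonneg; intros y _; destruct (g y); lra).
  destruct Hk as [->|Hk]; [rewrite Hg; lra|].
  specialize (IH Hk). destruct (g k'); lra.
Qed.

Lemma sumR_configs_cons (f : config -> R) a A :
  sumR (map f (configs (a :: A))) =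
  sumR (map (fun s => f (upd s a false) + f (upd s a true)) (configs A)).
Proof.
  cbn [configs]. induction (configs A) as [|s L IH]; simpl; [reflexivity | rewrite IH; ring].
Qed.

Lemma configs_agree_exists C xi : exists s, In s (configs C) /\ forall x, In x C -> s x = xi x.
Proof.
  induction C as [|c C [s [Hs Hsx]]].
  - exists (fun _ => false). split; [left; reflexivity | intros _ []].
  - exists (upd s c (xi c)). split.
    + apply in_flat_map. exists s. split; [exact Hs|]. destruct (xi c); simpl; auto.
    + intros x Hx. unfold upd. destruct (site_eqb x c) eqn:E.
      * apply site_eqb_spec in E. subst. reflexivity.
      * destruct Hx as [->|Hx]; [|auto].
        rewrite (proj2 (site_eqb_spec x x) eq_refl) in E. discriminate.
Qed.

Lemma marg_ext nu A C C' z z' : (forall x, In x C <-> In x C') ->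
  (forall x, In x C -> z x = z' x) -> marg nu A C z = marg nu A C' z'.
Proof.
  intros HC Hz. unfold marg. f_equal. apply map_ext. intros s.
  rewrite (agreeb_ext C C' s s z z'); auto.
Qed.

Lemma mass_le_sum_marg (nu : measure) A (K : list (list site * config)) :
  (forall s, In s (configs A) -> 0 <= nu s) ->
  (forall s, In s (configs A) -> exists k, In k K /\ agreeb (fst k) s (snd k) = true) ->
  sumR (map nu (configs A)) <= sumR (map (fun k => marg nu A (fst k) (snd k)) K).
Proof.
  intros Hnn Hcov. unfold marg.
  rewrite (sumR_exchange (fun k s => if agreeb (fst k) s (snd k) then nu s else 0)).
  apply sumR_le. intros s Hs.
  apply (le_sumR_indicator (fun k => agreeb (fst k) s (snd k))); auto.
Qed.

Definition merge (D : list site) (s xi : config) : config :=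
  fun x => if occ D x then s x else xi x.

Lemma merge_cons_upd a D s c xi : merge (a :: D) (upd s a c) xi = upd (merge D s xi) a c.
Proof.
  apply functional_extensionality. intros x. unfold merge, upd, occ. simpl.
  destruct (site_eqb x a); reflexivity.
Qed.

Lemma merge_notin D s xi x : ~ In x D -> merge D s xi x = xi x.
Proof.
  intros Hx. unfold merge. destruct (occ D x) eqn:E; [apply occ_spec in E; contradiction | reflexivity].
Qed.

Section CylinderConsistency.

Variable P : list site -> config -> R.
Hypothesis P_perm : forall A B xi, (forall x, In x A <-> In x B) -> P A xi = P B xi.
Hypothesis P_split : forall a A xi, ~ In a A ->
  P A xi = P (a :: A) (upd xi a false) + P (a :: A) (upd xi a true).
Hypothesis P_local : forall A xi xi', (forall x, In x A -> xi x = xi' x) -> P A xi = P A xi'.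

Lemma sum_P_merge A : NoDup A -> forall B C xi, incl B A -> (forall x, In x A -> ~ In x C) ->
  sumR (map (fun s => if agreeb B s xi then P (A ++ C) (merge A s xi) else 0) (configs A))
  = P (B ++ C) xi.
Proof.
  induction 1 as [|a A HaA HA IH]; intros B C xi HB HC.
  - destruct B as [|b B]; [simpl; apply Rplus_0_r | destruct (HB b (or_introl eq_refl))].
  - rewrite sumR_configs_cons.
    assert (HaC : ~ In a C) by (apply HC; left; reflexivity).
    assert (HAC : forall x, In x A -> ~ In x C) by (intros x Hx; apply HC; right; exact Hx).
    destruct (in_dec site_eq_dec a B) as [HaB|HaB].
    + set (B0 := remove site_eq_dec a B).
      rewrite <- (P_perm (B0 ++ a :: C)).
      2:{ intros x. rewrite !in_app_iff. simpl. destruct (site_eq_dec x a) as [->|Hxa].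
          - tauto.
          - split; [intros [Hx|[->|Hx]]; [left; exact (proj1 (in_remove _ _ _ _ Hx))|..]; tauto
                   | intros [Hx|Hx]; [left; apply in_in_remove|]; auto]. }
      rewrite <- (IH B0 (a :: C) xi).
      2:{ intros x Hx. destruct (in_remove _ _ _ _ Hx) as [HxB Hxa].
          destruct (HB x HxB); [congruence | assumption]. }
      2:{ intros x Hx [->|HxC]; [contradiction | exact (HAC x Hx HxC)]. }
      f_equal. apply map_ext. intros s.
      rewrite !agreeb_upd_in, !merge_cons_upd by exact HaB. fold B0.
      assert (Hperm : forall m, P (a :: A ++ C) m = P (A ++ a :: C) m)
        by (intros m; apply P_perm; intros x; simpl; rewrite !in_app_iff; simpl; tauto).
      cbn [app]. rewrite !Hperm, <- (merge_notin A s xi a HaA).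
      generalize (upd_id (merge A s xi) a).
      destruct (merge A s xi a), (agreeb B0 s xi); intros ->; simpl; ring.
    + assert (HB' : incl B A) by (intros x Hx; destruct (HB x Hx); [subst; contradiction | auto]).
      rewrite <- (IH B C xi HB' HAC).
      f_equal. apply map_ext. intros s.
      rewrite !agreeb_upd_notin, !merge_cons_upd by exact HaB.
      destruct (agreeb B s xi); [|ring].
      symmetry. apply P_split. rewrite in_app_iff. tauto.
Qed.

Lemma marg_P A B xi : NoDup A -> incl B A -> marg (P A) A B xi = P B xi.
Proof.
  intros HA HB.
  pose proof (sum_P_merge A HA B [] xi HB (fun _ _ H => H)) as Hsum.
  rewrite !app_nil_r in Hsum. rewrite <- Hsum. unfold marg. f_equal. apply map_ext. intros s.
  destruct (agreeb B s xi); [|reflexivity].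
  apply P_local. intros x Hx. unfold merge.
  rewrite (proj2 (occ_spec A x) Hx). reflexivity.
Qed.

Lemma is_prob_P A : NoDup A -> (forall xi, 0 <= P A xi) -> (forall xi, P [] xi = 1) ->
  is_prob (P A) A.
Proof.
  intros HA Hnn Hnil. split; [intros s _; apply Hnn|].
  rewrite <- (Hnil (fun _ => false)), <- (marg_P A [] _ HA (incl_nil_l A)). reflexivity.
Qed.

End CylinderConsistency.

Definition supported (s : config) : bool := existsb (agreeb Lam s) [eta1; eta2; eta3; eta4].

Lemma mu_unsupported s : supported s = false -> mu s = 0.
Proof.
  unfold supported, mu. cbn [existsb].
  destruct (agreeb Lam s eta1), (agreeb Lam s eta2), (agreeb Lam s eta3), (agreeb Lam s eta4);
    simpl; intros H; discriminate || lra.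
Qed.

Lemma supported_ext s t : (forall x, In x Lam -> s x = t x) -> supported s = supported t.
Proof.
  intros H. unfold supported. cbn [existsb].
  rewrite !(agreeb_ext Lam Lam s t _ _ (fun _ => iff_refl _) H (fun _ _ => eq_refl)).
  reflexivity.
Qed.

Lemma marg_mu_unsupported xi : supported xi = false -> marg mu Lam Lam xi = 0.
Proof.
  intros Hxi. apply sumR_zero. intros s _.
  destruct (agreeb Lam s xi) eqn:E; [|reflexivity].
  apply mu_unsupported. rewrite <- Hxi. apply supported_ext, agreeb_spec, E.
Qed.

Lemma Lam_add_in_sq3 o y : In o Lam -> In y Lam -> In (vadd o y) (sq3 0 0).
Proof. simpl. intros Ho Hy. intuition subst; simpl; tauto. Qed.

Lemma exists_unsupported_window c s :
  exists o, In o Lam /\ supported (tshift s (vadd c o)) = false.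
Proof.
  destruct (configs_agree_exists (sq3 0 0) (tshift s c)) as [t [Ht Hts]].
  assert (Htiles : forallb (fun t => existsb (fun o => negb (supported (tshift t o))) Lam)
                     (configs (sq3 0 0)) = true) by (vm_compute; reflexivity).
  rewrite forallb_forall in Htiles. apply Htiles, existsb_exists in Ht.
  destruct Ht as [o [Ho Hunsupp]]. exists o. split; [exact Ho|].
  apply negb_true_iff in Hunsupp. rewrite <- tshift_tshift, <- Hunsupp.
  apply supported_ext. intros y Hy. unfold tshift at 1 2.
  symmetry. apply Hts. rewrite vadd_comm. apply Lam_add_in_sq3; assumption.
Qed.

Lemma no_measure_with_mu_windows (A : list site) (c : site) (nu : measure) :
  is_prob nu A ->
  ~ (forall o xi, In o Lam -> supported (tshift xi (vadd c o)) = false ->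
       marg nu A (map (vadd (vadd c o)) Lam) xi = 0).
Proof.
  intros [Hnn Hmass] Hwin.
  set (forbidden := filter (fun p => negb (supported p)) (configs Lam)).
  set (K := flat_map (fun o => map (fun p => (map (vadd (vadd c o)) Lam, unshift p (vadd c o)))
                                   forbidden) Lam).
  assert (Hcover : forall s, In s (configs A) ->
            exists k, In k K /\ agreeb (fst k) s (snd k) = true).
  { intros s _. destruct (exists_unsupported_window c s) as [o [Ho Hs]].
    destruct (configs_agree_exists Lam (tshift s (vadd c o))) as [p [Hp Hps]].
    exists (map (vadd (vadd c o)) Lam, unshift p (vadd c o)). split.
    - apply in_flat_map. exists o. split; [exact Ho|].
      apply in_map_iff. exists p. split; [reflexivity|]. apply filter_In. split; [exact Hp|]. rewrite (supported_ext p (tshift s (vadd c o))), Hs by exact Hps.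
      reflexivity.
    - cbn [fst snd]. apply agreeb_spec. intros x Hx. apply in_map_iff in Hx. destruct Hx as [y [<- Hy]].
      unfold unshift. rewrite vsub_vaddl, Hps by exact Hy. unfold tshift.
      rewrite vadd_comm. reflexivity. }
  assert (Hzero : sumR (map (fun k => marg nu A (fst k) (snd k)) K) = 0).
  { apply sumR_zero. intros k Hk. apply in_flat_map in Hk. destruct Hk as [o [Ho Hk]].
    apply in_map_iff in Hk. destruct Hk as [p [<- Hp]]. apply filter_In in Hp.
    apply Hwin; [exact Ho|]. cbn [snd]. rewrite tshift_unshift. apply negb_true_iff, Hp. }
  pose proof (mass_le_sum_marg nu A K Hnn Hcover). lra.
Qed.

Lemma no_measure_with_window_marginals_mu a b :
  ~ exists nu : measure,
      is_prob nu (sq3 a b) /\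
      (forall i j : Z, (0 <= i <= 1)%Z -> (0 <= j <= 1)%Z ->
         forall xi : config,
           marg nu (sq3 a b) (map (vadd ((a + i)%Z, (b + j)%Z)) Lam) xi
           = mu (tshift xi ((a + i)%Z, (b + j)%Z))).
Proof.
  intros [nu [Hprob Hwin]]. apply (no_measure_with_mu_windows (sq3 a b) (a, b) nu Hprob).
  intros [i j] xi Ho Hxi.
  assert (Hij : (0 <= i <= 1)%Z /\ (0 <= j <= 1)%Z)
    by (destruct Ho as [H|[H|[H|[H|[]]]]]; injection H as <- <-; lia).
  change (vadd (a, b) (i, j)) with ((a + i)%Z, (b + j)%Z) in *.
  rewrite Hwin by tauto. apply mu_unsupported, Hxi.
Qed.

Lemma NoDup_sq3_00 : NoDup (sq3 0 0).
Proof. simpl. repeat constructor; simpl; intuition discriminate. Qed.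

Lemma no_TIExtension_mu : ~ TIExtension mu.
Proof.
  intros [P [Hnn [Hnil [Hperm [Hlocal [Hsplit [Hshift HLam]]]]]]].
  apply (no_measure_with_mu_windows (sq3 0 0) (0, 0)%Z (P (sq3 0 0))).
  - exact (is_prob_P P Hperm Hsplit Hlocal _ NoDup_sq3_00 (Hnn _) Hnil).
  - intros o xi Ho Hxi. rewrite vadd0l in *.
    rewrite (marg_P P Hperm Hsplit Hlocal _ _ _ NoDup_sq3_00), Hshift, HLam.
    + apply marg_mu_unsupported, Hxi.
    + intros x Hx. apply in_map_iff in Hx. destruct Hx as [y [<- Hy]].
      apply Lam_add_in_sq3; assumption.
Qed.

Fixpoint sublists (l : list site) : list (list site) :=
  match l with
  | [] => [[]]
  | x :: l' => map (cons x) (sublists l') ++ sublists l'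
  end.

Lemma filter_in_sublists f l : In (filter f l) (sublists l).
Proof.
  induction l as [|a l IH]; simpl; [left; reflexivity|].
  destruct (f a); apply in_or_app; [left; apply in_map | right]; exact IH.
Qed.

Definition diffs (A : list site) : list site :=
  flat_map (fun x => map (fun y => vsub y x) A) A.

Lemma in_diffs A v b : In b A -> In (vadd v b) A -> In v (diffs A).
Proof.
  intros Hb Hvb. apply in_flat_map. exists b. split; [exact Hb|].
  apply in_map_iff. exists (vadd v b). split; [apply vsub_vaddr | exact Hvb].
Qed.

(* A translate [v + B] of a nonempty [B] inside [A] has [v] among the differences of [A], and
   [B] may be replaced by the sublist of [A] with the same elements. *)
Lemma LTI_of_sublists (nu : measure) (A : list site) :
  (forall v B, In v (diffs A) -> In B (sublists A) -> incl (map (vadd v) B) A ->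
     forall z, In z (configs (map (vadd v) B)) ->
     marg nu A (map (vadd v) B) z = marg nu A B (tshift z v)) ->
  LTI nu A.
Proof.
  intros Hsub B v HB HBv xi.
  destruct B as [|b B0] eqn:EB; [reflexivity|]. rewrite <- EB in *.
  assert (Hv : In v (diffs A)).
  { apply (in_diffs A v b); [apply HB | apply HBv, in_map]; subst; left; reflexivity. }
  set (B' := filter (occ B) A).
  assert (HBB' : forall x, In x B <-> In x B').
  { intros x. unfold B'. rewrite filter_In, occ_spec. split; [intros H; split; auto | tauto]. }
  assert (HvBB' : forall x, In x (map (vadd v) B) <-> In x (map (vadd v) B')).
  { intros x. rewrite !in_map_iff. split; intros [y [<- Hy]]; exists y; split; auto;
      apply HBB'; exact Hy. }
  destruct (configs_agree_exists (map (vadd v) B') xi) as [z [Hz Hzx]].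
  rewrite (marg_ext nu A _ _ xi z HvBB'), (marg_ext nu A B B' (tshift xi v) (tshift z v) HBB').
  - apply Hsub; [exact Hv | apply filter_in_sublists | | exact Hz].
    intros x Hx. apply HBv, HvBB', Hx.
  - intros x Hx. unfold tshift. rewrite vadd_comm. symmetry. apply Hzx, in_map, HBB', Hx.
  - intros x Hx. symmetry. apply Hzx, HvBB', Hx.
Qed.

Definition mu_count (s : config) : nat :=
  length (filter (agreeb Lam s) [eta1; eta2; eta3; eta4]).

Definition marg_count (C : list site) (z : config) : nat :=
  list_sum (map (fun s => if agreeb C s z then mu_count s else 0%nat) (configs Lam)).

Lemma mu_count_spec s : mu s = INR (mu_count s) / 4.
Proof.
  unfold mu, mu_count. cbn [filter].
  destruct (agreeb Lam s eta1), (agreeb Lam s eta2), (agreeb Lam s eta3), (agreeb Lam s eta4);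
    simpl; lra.
Qed.

Lemma marg_count_spec C z : marg mu Lam C z = INR (marg_count C z) / 4.
Proof.
  unfold marg, marg_count. induction (configs Lam) as [|s L IH]; simpl; [lra|].
  rewrite plus_INR, IH. destruct (agreeb C s z); [rewrite mu_count_spec | simpl]; lra.
Qed.

Lemma LTI_mu : LTI mu Lam.
Proof.
  apply LTI_of_sublists. intros v B Hv HB Hincl z Hz.
  assert (Hcheck : forallb (fun v => forallb (fun B =>
             implb (inclb (map (vadd v) B) Lam)
               (forallb (fun z => Nat.eqb (marg_count (map (vadd v) B) z)
                                          (marg_count B (tshift z v)))
                  (configs (map (vadd v) B)))) (sublists Lam)) (diffs Lam) = true)
    by (vm_compute; reflexivity).
  rewrite forallb_forall in Hcheck. specialize (Hcheck v Hv).
  rewrite forallb_forall in Hcheck. specialize (Hcheck B HB).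
  rewrite (proj2 (inclb_spec _ _) Hincl) in Hcheck. cbn [implb] in Hcheck.
  rewrite forallb_forall in Hcheck.
  apply Hcheck, Nat.eqb_eq in Hz.
  rewrite !marg_count_spec, Hz. reflexivity.
Qed.

Theorem mainTheorem13 :
  LTI mu Lam /\
  (forall a b : Z, incl Lam (sq3 a b) ->
     ~ exists nu : measure,
         is_prob nu (sq3 a b) /\
         (forall i j : Z, (0 <= i <= 1)%Z -> (0 <= j <= 1)%Z ->
            forall xi : config,
              marg nu (sq3 a b) (map (vadd ((a + i)%Z, (b + j)%Z)) Lam) xi
              = mu (tshift xi ((a + i)%Z, (b + j)%Z)))) /\
  ~ TIExtension mu.
Proof.
  split; [exact LTI_mu|].
  split; [intros a b _; apply no_measure_with_window_marginals_mu | exact no_TIExtension_mu].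
Qed.
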